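(* Let $\Gamma\triangleright W$ be a well-formed CCCP configuration, $c$ a channel and $v$ a closed value, and let $\mathit{eureka},\mathit{fail}$ be channels that do not occur free in $W$ and are idle in $\Gamma$; let $\mathit{arb},\mathit{no}$ be closed values with $\delta_{\mathit{arb}}=\delta_{\mathit{no}}=1$. Define $T_{c?v}=c!\langle v\rangle.\mathit{eureka}!\langle\mathit{arb}\rangle.\mathbf 0+\mathit{fail}!\langle\mathit{no}\rangle.\mathbf 0$ and $T^{\checkmark}_{c?v}=\sigma^{\delta_v}.\mathit{eureka}!\langle\mathit{arb}\rangle.\mathbf 0$. Then $\Gamma\triangleright W\overset{c?v}{\Rightarrow}\Gamma'\triangleright W'$ if and only if $\Gamma\triangleright W|T_{c?v}\to_i^*\Gamma'\triangleright W'|T^{\checkmark}_{c?v}$.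
   Context: CCCP syntax. Fix a set of channels (ranged over by $c,d$) and a set of values containing data variables $x,y$ and a special error value $\mathtt{err}$; closed values $v,w$ contain no variables, and each closed value $v$ has a transmission time $\delta_v\in\mathbb{N}$ with $\delta_v\ge 1$. Expressions $e$ are built from values; closed expressions evaluate to closed values via $[\![e]\!]$. Station code (processes) is given by $P,Q ::= c!\langle e\rangle.P \mid \lfloor ?c(x).P\rfloor Q \mid \sigma.P \mid \tau.P \mid P+Q \mid [b]P,Q \mid X \mid \mathbf{0} \mid \mathrm{fix}\,X.P$, where $b$ is either $e_1=e_2$ or $\mathrm{exp}(c)$, $[b]P,Q$ is a conditional (then-branch $P$, else-branch $Q$), $\lfloor ?c(x).P\rfloor Q$ is a receiver on $c$ with timeout branch $Q$ ($x$ bound in $P$), $\sigma.P$ is a one-unit delay and $\sigma^n.P$ denotes $n$ nested delays. System terms are $W ::= P \mid \lfloor ?c(x).P\rfloor \mid W_1|W_2 \mid \nu c{:}(n,v).W$, where $\lfloor ?c(x).P\rfloor$ is an active receiver ($x$ bound in $P$) and $\nu c{:}(n,v).W$ restricts $c$ with local channel state $(n,v)$. In $\mathrm{fix}\,X.P$ every occurrence of $X$ in $P$ is guarded, i.e. lies within a broadcast prefix, a receiver continuation, a timeout branch, a $\sigma$-prefix, or a branch of a conditional. Terms are identified up to $\alpha$-conversion. A channel environment is a map $\Gamma$ from channels to $\mathbb{N}\times$(closed values); write $\Gamma\vdash_t c:n$ and $\Gamma\vdash_v c:w$ when $\Gamma(c)=(n,w)$; $c$ is idle in $\Gamma$ if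 $\Gamma\vdash_t c:0$ and exposed otherwise; $\Gamma[c\mapsto(n,v)]$ is $\Gamma$ updated at $c$; $\Gamma\le\Gamma'$ iff for every $c$, $\Gamma\vdash_t c:n$ and $\Gamma'\vdash_t c:m$ imply $n\le m$. A configuration $\Gamma\triangleright W$ is a channel environment together with a closed system term (no free data or process variables). Intensional semantics. Actions $\lambda$ are $c!v$, $c?v$, $\sigma$, $\tau$. The environment update $\lambda(\Gamma)$ is: $\sigma(\Gamma)(c)=(\max(n-1,0),w)$ whenever $\Gamma(c)=(n,w)$; $c!v(\Gamma)$ agrees with $\Gamma$ except at $c$, where it is $(\delta_v,v)$ if $c$ is idle in $\Gamma$ and $(\max(\delta_v,n),\mathtt{err})$ if $\Gamma\vdash_t c:n>0$; $c?v(\Gamma)=c!v(\Gamma)$; $\tau(\Gamma)=\Gamma$. The predicate $\mathrm{rcv}(W,c)$ on terms is: true for $\lfloor ?d(x).P\rfloor Q$ iff $d=c$; $\mathrm{rcv}(P+Q,c)=\mathrm{rcv}(P,c)\vee\mathrm{rcv}(Q,c)$; $\mathrm{rcv}(\mathrm{fix}\,X.P,c)=\mathrm{rcv}(P,c)$; $\mathrm{rcv}(W_1|W_2,c)=\mathrm{rcv}(W_1,c)\vee\mathrm{rcv}(W_2,c)$; $\mathrm{rcv}(\nu d{:}(n,v).W,c)=\mathrm{rcv}(W,c)$ (with $d\neq c$ by $\alpha$-conversion); false for all other forms (broadcasts, $\tau.P$, $\sigma.P$, conditionals, $X$, $\mathbf 0$, active receivers). Then $\mathrm{rcv}(\Gamma\triangleright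 W,c)$ holds iff $c$ is idle in $\Gamma$ and $\mathrm{rcv}(W,c)$. Transitions $\Gamma\triangleright W\xrightarrow{\lambda}W'$ are the least relation closed under: (Snd) $[\![e]\!]=v$ implies $\Gamma\triangleright c!\langle e\rangle.P\xrightarrow{c!v}\sigma^{\delta_v}.P$; (Rcv) $c$ idle in $\Gamma$ implies $\Gamma\triangleright\lfloor ?c(x).P\rfloor Q\xrightarrow{c?v}\lfloor ?c(x).P\rfloor$; (RcvIgn) $\neg\mathrm{rcv}(\Gamma\triangleright W,c)$ implies $\Gamma\triangleright W\xrightarrow{c?v}W$; (Sync) $\Gamma\triangleright W_1\xrightarrow{c!v}W_1'$ and $\Gamma\triangleright W_2\xrightarrow{c?v}W_2'$ imply $\Gamma\triangleright W_1|W_2\xrightarrow{c!v}W_1'|W_2'$, and symmetrically; (RcvPar) $\Gamma\triangleright W_i\xrightarrow{c?v}W_i'$ for $i=1,2$ imply $\Gamma\triangleright W_1|W_2\xrightarrow{c?v}W_1'|W_2'$; (TimeNil) $\Gamma\triangleright\mathbf 0\xrightarrow{\sigma}\mathbf 0$; (Sleep) $\Gamma\triangleright\sigma.P\xrightarrow{\sigma}P$; (ActRcv) $\Gamma\vdash_t c:n$, $n>1$ imply $\Gamma\triangleright\lfloor ?c(x).P\rfloor\xrightarrow{\sigma}\lfloor ?c(x).P\rfloor$; (EndRcv) $\Gamma\vdash_t c:1$, $\Gamma\vdash_v c:w$ imply $\Gamma\triangleright\lfloor ?c(x).P\rfloor\xrightarrow{\sigma}\{w/x\}P$; (Timeout)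 $c$ idle in $\Gamma$ implies $\Gamma\triangleright\lfloor ?c(x).P\rfloor Q\xrightarrow{\sigma}Q$; (RcvLate) $c$ exposed in $\Gamma$ implies $\Gamma\triangleright\lfloor ?c(x).P\rfloor Q\xrightarrow{\tau}\lfloor ?c(x).\{\mathtt{err}/x\}P\rfloor$; (Tau) $\Gamma\triangleright\tau.P\xrightarrow{\tau}P$; (Then)/(Else) $\Gamma\triangleright[b]P,Q\xrightarrow{\tau}\sigma.P$ if $[\![b]\!]_\Gamma$ is true and $\xrightarrow{\tau}\sigma.Q$ otherwise, where $[\![e_1=e_2]\!]_\Gamma$ is true iff $[\![e_1]\!]=[\![e_2]\!]$ and $[\![\mathrm{exp}(c)]\!]_\Gamma$ is true iff $c$ is exposed in $\Gamma$; (TimePar) $\Gamma\triangleright W_i\xrightarrow{\sigma}W_i'$ for $i=1,2$ imply $\Gamma\triangleright W_1|W_2\xrightarrow{\sigma}W_1'|W_2'$; (TauPar) $\Gamma\triangleright W_1\xrightarrow{\tau}W_1'$ implies $\Gamma\triangleright W_1|W_2\xrightarrow{\tau}W_1'|W_2$, and symmetrically; (Rec) $\Gamma\triangleright\{\mathrm{fix}\,X.P/X\}P\xrightarrow{\lambda}W$ implies $\Gamma\triangleright\mathrm{fix}\,X.P\xrightarrow{\lambda}W$; (Sum) for $\lambda\in\{\tau,c!v\}$, $\Gamma\triangleright P\xrightarrow{\lambda}W$ implies $\Gamma\triangleright P+Q\xrightarrow{\lambda}W$, and symmetrically; (SumTime) $\Gamma\triangleright P\xrightarrow{\sigma}P'$,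 $\Gamma\triangleright Q\xrightarrow{\sigma}Q'$ imply $\Gamma\triangleright P+Q\xrightarrow{\sigma}P'+Q'$; (SumRcv) $\Gamma\triangleright P\xrightarrow{c?v}W$ and $\mathrm{rcv}(\Gamma\triangleright P,c)$ imply $\Gamma\triangleright P+Q\xrightarrow{c?v}W$, and symmetrically; (ResI) $\Gamma[c\mapsto(n,v)]\triangleright W\xrightarrow{c!w}W'$ implies $\Gamma\triangleright\nu c{:}(n,v).W\xrightarrow{\tau}\nu c{:}(c!w(\Gamma[c\mapsto(n,v)]))(c).W'$; (ResV) $\Gamma[c\mapsto(n,v)]\triangleright W\xrightarrow{\lambda}W'$ with $c$ not occurring in $\lambda$ implies $\Gamma\triangleright\nu c{:}(n,v).W\xrightarrow{\lambda}\nu c{:}(\lambda(\Gamma[c\mapsto(n,v)]))(c).W'$. Reductions. $\Gamma\triangleright W\to\Gamma'\triangleright W'$ iff $\Gamma\triangleright W\xrightarrow{\lambda}W'$ for some $\lambda\in\{c!v,\sigma,\tau\}$ and $\Gamma'=\lambda(\Gamma)$; it is instantaneous ($\to_i$) if $\lambda\neq\sigma$ and timed ($\to_\sigma$) if $\lambda=\sigma$. Extensional semantics. Extensional actions $\alpha\in\{c?v,\sigma,\tau,\gamma(c,v),\iota(c)\}$ between configurations are given by: (Input) $\Gamma\triangleright W\xrightarrow{c?v}W'$ implies $\Gamma\triangleright W\overset{c?v}{\rightarrowtail}c?v(\Gamma)\triangleright W'$; (Time) $\Gamma\triangleright W\xrightarrow{\sigma}W'$ implies $\Gamma\triangleright W\overset{\sigma}{\rightarrowtail}\sigma(\Gamma)\triangleright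 W'$; (Shh) $\Gamma\triangleright W\xrightarrow{c!v}W'$ implies $\Gamma\triangleright W\overset{\tau}{\rightarrowtail}c!v(\Gamma)\triangleright W'$; (TauExt) $\Gamma\triangleright W\xrightarrow{\tau}W'$ implies $\Gamma\triangleright W\overset{\tau}{\rightarrowtail}\Gamma\triangleright W'$; (Deliver) $\Gamma(c)=(1,v)$ and $\Gamma\triangleright W\xrightarrow{\sigma}W'$ imply $\Gamma\triangleright W\overset{\gamma(c,v)}{\rightarrowtail}\sigma(\Gamma)\triangleright W'$; (Idle) $c$ idle in $\Gamma$ implies $\Gamma\triangleright W\overset{\iota(c)}{\rightarrowtail}\Gamma\triangleright W$. Weak actions: $\Rightarrow$ is the reflexive-transitive closure of $\overset{\tau}{\rightarrowtail}$; $\overset{\alpha}{\Rightarrow}$ is $\Rightarrow\overset{\alpha}{\rightarrowtail}\Rightarrow$. Well-formedness. The set of well-formed configurations is the least set such that: $\Gamma\triangleright P$ is well-formed for every closed process $P$; $\Gamma\triangleright\lfloor ?c(x).P\rfloor$ is well-formed whenever $c$ is exposed in $\Gamma$; $\Gamma\triangleright W_1|W_2$ is well-formed whenever $\Gamma\triangleright W_1$ and $\Gamma\triangleright W_2$ are; $\Gamma\triangleright\nu c{:}(n,v).W$ is well-formed whenever $\Gamma[c\mapsto(n,v)]\triangleright W$ is. *)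

From HB Require Import structures.
From mathcomp Require Import all_boot.

Set Implicit Arguments.
Unset Strict Implicit.
Unset Printing Implicit Defensive.

(* The parameters of the calculus: channels, data variables, closed values,
   operation symbols of the expression language with their interpretation,
   the error value and the transmission time of closed values. *)
Record lang := Lang {
  chan : eqType;
  dvar : eqType;
  cval : Type;
  fsym : Type;
  interp : fsym -> cval -> cval -> cval;
  err : cval;
  delta : cval -> nat }.

Definition pvar := nat.

Section CCCP.
Context {L : lang}.
Local Notation C := (chan L).
Local Notation X := (dvar L).
Local Notation V := (cval L).

Inductive expr :=
| EVal (v : V) | EVar (x : X) | EOp (f : fsym L) (e1 e2 : expr).

Inductive bexp := BEq (e1 e2 : expr) | BExp (c : C).

Inductive proc :=
| PSnd (c : C) (e : expr) (P : proc)
| PRcv (c : C) (x : X) (P Q : proc)             (* |_?c(x).P_|Q *)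
| PSig (P : proc)
| PTau (P : proc)
| PSum (P Q : proc)
| PIf (b : bexp) (P Q : proc)
| PVar (Y : pvar)
| PNil
| PFix (Y : pvar) (P : proc).

Inductive sys :=
| SProc (P : proc)
| SAct (c : C) (x : X) (P : proc)               (* active receiver |_?c(x).P_| *)
| SPar (W1 W2 : sys)
| SRes (c : C) (n : nat) (v : V) (W : sys).

(* evaluation of (closed) expressions; the EVar case never arises on
   closed expressions *)
Fixpoint eval (e : expr) : V :=
  match e with
  | EVal v => v
  | EVar _ => err L
  | EOp f e1 e2 => interp f (eval e1) (eval e2)
  end.

Fixpoint esubst (w : V) (x : X) (e : expr) : expr :=
  match e with
  | EVal v => EVal v
  | EVar y => if y == x then EVal w else EVar y
  | EOp f e1 e2 => EOp f (esubst w x e1) (esubst w x e2)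
  end.

Definition bsubst (w : V) (x : X) (b : bexp) : bexp :=
  match b with
  | BEq e1 e2 => BEq (esubst w x e1) (esubst w x e2)
  | BExp c => BExp c
  end.

Fixpoint psubst (w : V) (x : X) (P : proc) : proc :=
  match P with
  | PSnd c e P => PSnd c (esubst w x e) (psubst w x P)
  | PRcv c y P Q => PRcv c y (if y == x then P else psubst w x P) (psubst w x Q)
  | PSig P => PSig (psubst w x P)
  | PTau P => PTau (psubst w x P)
  | PSum P Q => PSum (psubst w x P) (psubst w x Q)
  | PIf b P Q => PIf (bsubst w x b) (psubst w x P) (psubst w x Q)
  | PVar Y => PVar Y
  | PNil => PNil
  | PFix Y P => PFix Y (psubst w x P)
  end.

Fixpoint psubstX (R : proc) (Y : pvar) (P : proc) : proc :=
  match P with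
  | PSnd c e P => PSnd c e (psubstX R Y P)
  | PRcv c y P Q => PRcv c y (psubstX R Y P) (psubstX R Y Q)
  | PSig P => PSig (psubstX R Y P)
  | PTau P => PTau (psubstX R Y P)
  | PSum P Q => PSum (psubstX R Y P) (psubstX R Y Q)
  | PIf b P Q => PIf b (psubstX R Y P) (psubstX R Y Q)
  | PVar Z => if Z == Y then R else PVar Z
  | PNil => PNil
  | PFix Z P => PFix Z (if Z == Y then P else psubstX R Y P)
  end.

Fixpoint sigma_n (n : nat) (P : proc) : proc :=
  match n with 0 => P | n'.+1 => PSig (sigma_n n' P) end.

Fixpoint eoccurs_d (y : X) (e : expr) : bool :=
  match e with
  | EVal _ => false
  | EVar z => z == y
  | EOp _ e1 e2 => eoccurs_d y e1 || eoccurs_d y e2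
  end.

Definition boccurs_d (y : X) (b : bexp) : bool :=
  match b with BEq e1 e2 => eoccurs_d y e1 || eoccurs_d y e2 | BExp _ => false end.

Fixpoint poccurs_d (y : X) (P : proc) : bool :=
  match P with
  | PSnd _ e P => eoccurs_d y e || poccurs_d y P
  | PRcv _ z P Q => (z == y) || poccurs_d y P || poccurs_d y Q
  | PSig P | PTau P | PFix _ P => poccurs_d y P
  | PSum P Q => poccurs_d y P || poccurs_d y Q
  | PIf b P Q => boccurs_d y b || poccurs_d y P || poccurs_d y Q
  | PVar _ | PNil => false
  end.

Fixpoint poccurs_X (Y : pvar) (P : proc) : bool :=
  match P with
  | PSnd _ _ P | PSig P | PTau P => poccurs_X Y P
  | PRcv _ _ P Q | PSum P Q | PIf _ P Q => poccurs_X Y P || poccurs_X Y Q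
  | PVar Z => Z == Y
  | PNil => false
  | PFix Z P => (Z == Y) || poccurs_X Y P
  end.

Definition boccurs_c (d : C) (b : bexp) : bool :=
  match b with BEq _ _ => false | BExp c => c == d end.

(* channels have no binders inside processes: occurs = occurs free *)
Fixpoint poccurs_c (d : C) (P : proc) : bool :=
  match P with
  | PSnd c _ P => (c == d) || poccurs_c d P
  | PRcv c _ P Q => (c == d) || poccurs_c d P || poccurs_c d Q
  | PSig P | PTau P | PFix _ P => poccurs_c d P
  | PSum P Q => poccurs_c d P || poccurs_c d Q
  | PIf b P Q => boccurs_c d b || poccurs_c d P || poccurs_c d Q
  | PVar _ | PNil => false
  end.

Fixpoint soccurs_c (d : C) (W : sys) : bool :=
  match W with
  | SProc P => poccurs_c d P
  | SAct c _ P => (c == d) || poccurs_c d P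
  | SPar W1 W2 => soccurs_c d W1 || soccurs_c d W2
  | SRes c _ _ W => (c == d) || soccurs_c d W
  end.

Fixpoint sfree_c (d : C) (W : sys) : bool :=
  match W with
  | SProc P => poccurs_c d P
  | SAct c _ P => (c == d) || poccurs_c d P
  | SPar W1 W2 => sfree_c d W1 || sfree_c d W2
  | SRes c _ _ W => (c != d) && sfree_c d W
  end.

Fixpoint erename (x y : X) (e : expr) : expr :=
  match e with
  | EVal v => EVal v
  | EVar z => if z == x then EVar y else EVar z
  | EOp f e1 e2 => EOp f (erename x y e1) (erename x y e2)
  end.

Definition brename (x y : X) (b : bexp) : bexp :=
  match b with BEq e1 e2 => BEq (erename x y e1) (erename x y e2) | BExp c => BExp c end.

Fixpoint prename_d (x y : X) (P : proc) : proc :=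
  match P with
  | PSnd c e P => PSnd c (erename x y e) (prename_d x y P)
  | PRcv c z P Q => PRcv c z (if z == x then P else prename_d x y P) (prename_d x y Q)
  | PSig P => PSig (prename_d x y P)
  | PTau P => PTau (prename_d x y P)
  | PSum P Q => PSum (prename_d x y P) (prename_d x y Q)
  | PIf b P Q => PIf (brename x y b) (prename_d x y P) (prename_d x y Q)
  | PVar Z => PVar Z
  | PNil => PNil
  | PFix Z P => PFix Z (prename_d x y P)
  end.

Fixpoint prename_X (Y Z : pvar) (P : proc) : proc :=
  match P with
  | PSnd c e P => PSnd c e (prename_X Y Z P)
  | PRcv c x P Q => PRcv c x (prename_X Y Z P) (prename_X Y Z Q)
  | PSig P => PSig (prename_X Y Z P)
  | PTau P => PTau (prename_X Y Z P)
  | PSum P Q => PSum (prename_X Y Z P) (prename_X Y Z Q)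
  | PIf b P Q => PIf b (prename_X Y Z P) (prename_X Y Z Q)
  | PVar U => if U == Y then PVar Z else PVar U
  | PNil => PNil
  | PFix U P => PFix U (if U == Y then P else prename_X Y Z P)
  end.

Definition rn (c d e : C) : C := if e == c then d else e.

Definition brename_c (c d : C) (b : bexp) : bexp :=
  match b with BEq e1 e2 => BEq e1 e2 | BExp e => BExp (rn c d e) end.

Fixpoint prename_c (c d : C) (P : proc) : proc :=
  match P with
  | PSnd e x P => PSnd (rn c d e) x (prename_c c d P)
  | PRcv e x P Q => PRcv (rn c d e) x (prename_c c d P) (prename_c c d Q)
  | PSig P => PSig (prename_c c d P)
  | PTau P => PTau (prename_c c d P)
  | PSum P Q => PSum (prename_c c d P) (prename_c c d Q)
  | PIf b P Q => PIf (brename_c c d b) (prename_c c d P) (prename_c c d Q)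
  | PVar Z => PVar Z
  | PNil => PNil
  | PFix Z P => PFix Z (prename_c c d P)
  end.

Fixpoint srename_c (c d : C) (W : sys) : sys :=
  match W with
  | SProc P => SProc (prename_c c d P)
  | SAct e x P => SAct (rn c d e) x (prename_c c d P)
  | SPar W1 W2 => SPar (srename_c c d W1) (srename_c c d W2)
  | SRes e n v W => SRes e n v (if e == c then W else srename_c c d W)
  end.

Inductive palpha : proc -> proc -> Prop :=
| pa_refl P : palpha P P
| pa_sym P Q : palpha P Q -> palpha Q P
| pa_trans P Q R : palpha P Q -> palpha Q R -> palpha P R
| pa_snd c e P P' : palpha P P' -> palpha (PSnd c e P) (PSnd c e P')
| pa_rcv c x P P' Q Q' : palpha P P' -> palpha Q Q' -> palpha (PRcv c x P Q) (PRcv c x P' Q')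
| pa_sig P P' : palpha P P' -> palpha (PSig P) (PSig P')
| pa_tau P P' : palpha P P' -> palpha (PTau P) (PTau P')
| pa_sum P P' Q Q' : palpha P P' -> palpha Q Q' -> palpha (PSum P Q) (PSum P' Q')
| pa_if b P P' Q Q' : palpha P P' -> palpha Q Q' -> palpha (PIf b P Q) (PIf b P' Q')
| pa_fix Y P P' : palpha P P' -> palpha (PFix Y P) (PFix Y P')
| pa_rcv_bind c x y P Q : ~~ poccurs_d y P ->
    palpha (PRcv c x P Q) (PRcv c y (prename_d x y P) Q)
| pa_fix_bind Y Z P : ~~ poccurs_X Z P ->
    palpha (PFix Y P) (PFix Z (prename_X Y Z P)).

Inductive salpha : sys -> sys -> Prop :=
| sa_refl W : salpha W W
| sa_sym W W' : salpha W W' -> salpha W' W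
| sa_trans W1 W2 W3 : salpha W1 W2 -> salpha W2 W3 -> salpha W1 W3
| sa_proc P P' : palpha P P' -> salpha (SProc P) (SProc P')
| sa_act c x P P' : palpha P P' -> salpha (SAct c x P) (SAct c x P')
| sa_par W1 W1' W2 W2' : salpha W1 W1' -> salpha W2 W2' -> salpha (SPar W1 W2) (SPar W1' W2')
| sa_res c n v W W' : salpha W W' -> salpha (SRes c n v W) (SRes c n v W')
| sa_act_bind c x y P : ~~ poccurs_d y P ->
    salpha (SAct c x P) (SAct c y (prename_d x y P))
| sa_res_bind c d n v W : ~~ soccurs_c d W ->
    salpha (SRes c n v W) (SRes d n v (srename_c c d W)).

Fixpoint eclosed (bd : seq X) (e : expr) : bool :=
  match e with
  | EVal _ => true
  | EVar x => x \in bd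
  | EOp _ e1 e2 => eclosed bd e1 && eclosed bd e2
  end.

Definition bclosed (bd : seq X) (b : bexp) : bool :=
  match b with BEq e1 e2 => eclosed bd e1 && eclosed bd e2 | BExp _ => true end.

Fixpoint pclosed (bd : seq X) (bp : seq pvar) (P : proc) : bool :=
  match P with
  | PSnd _ e P => eclosed bd e && pclosed bd bp P
  | PRcv _ x P Q => pclosed (x :: bd) bp P && pclosed bd bp Q
  | PSig P | PTau P => pclosed bd bp P
  | PSum P Q => pclosed bd bp P && pclosed bd bp Q
  | PIf b P Q => [&& bclosed bd b, pclosed bd bp P & pclosed bd bp Q]
  | PVar Y => Y \in bp
  | PNil => true
  | PFix Y P => pclosed bd (Y :: bp) P
  end.

Fixpoint sclosed (W : sys) : bool :=
  match W with
  | SProc P => pclosed [::] [::] P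
  | SAct _ x P => pclosed [:: x] [::] P
  | SPar W1 W2 => sclosed W1 && sclosed W2
  | SRes _ _ _ W => sclosed W
  end.

Fixpoint unguarded (Y : pvar) (P : proc) : bool :=
  match P with
  | PSnd _ _ _ | PRcv _ _ _ _ | PSig _ | PIf _ _ _ | PNil => false
  | PTau P => unguarded Y P
  | PSum P Q => unguarded Y P || unguarded Y Q
  | PVar Z => Z == Y
  | PFix Z P => (Z != Y) && unguarded Y P
  end.

Fixpoint pguarded (P : proc) : bool :=
  match P with
  | PSnd _ _ P | PSig P | PTau P => pguarded P
  | PRcv _ _ P Q | PSum P Q | PIf _ P Q => pguarded P && pguarded Q
  | PVar _ | PNil => true
  | PFix Y P => ~~ unguarded Y P && pguarded P
  end.

Fixpoint sguarded (W : sys) : bool :=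
  match W with
  | SProc P | SAct _ _ P => pguarded P
  | SPar W1 W2 => sguarded W1 && sguarded W2
  | SRes _ _ _ W => sguarded W
  end.

Definition env := C -> (nat * V)%type.

Definition idle (G : env) (c : C) : bool := (G c).1 == 0.
Definition exposed (G : env) (c : C) : bool := 0 < (G c).1.

Definition upd (G : env) (c : C) (p : nat * V) : env :=
  fun d => if d == c then p else G d.

Inductive act := ASnd (c : C) (v : V) | ARcv (c : C) (v : V) | ASig | ATau.

Definition act_upd (l : act) (G : env) : env :=
  match l with
  | ASig => fun d => ((G d).1.-1, (G d).2)
  | ASnd c v | ARcv c v =>
      if (G c).1 == 0 then upd G c (delta v, v)
      else upd G c (maxn (delta v) (G c).1, err L)
  | ATau => G
  end.

Definition act_mentions (c : C) (l : act) : bool :=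
  match l with ASnd d _ | ARcv d _ => d == c | _ => false end.

Definition beval (G : env) (b : bexp) : Prop :=
  match b with
  | BEq e1 e2 => eval e1 = eval e2
  | BExp c => exposed G c
  end.

Fixpoint rcvp (P : proc) (c : C) : bool :=
  match P with
  | PRcv d _ _ _ => d == c
  | PSum P Q => rcvp P c || rcvp Q c
  | PFix _ P => rcvp P c
  | _ => false
  end.

Fixpoint rcvs (W : sys) (c : C) : bool :=
  match W with
  | SProc P => rcvp P c
  | SAct _ _ _ => false
  | SPar W1 W2 => rcvs W1 c || rcvs W2 c
  | SRes d _ _ W => (d != c) && rcvs W c   (* d = c: bound c renamed apart *)
  end.

Definition rcvc (G : env) (W : sys) (c : C) : bool := idle G c && rcvs W c.

Definition out_act (l : act) : Prop := l = ATau \/ exists c v, l = ASnd c v.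

Inductive trans : env -> sys -> act -> sys -> Prop :=
| TSnd G c e P v : eval e = v ->
    trans G (SProc (PSnd c e P)) (ASnd c v) (SProc (sigma_n (delta v) P))
| TRcv G c x P Q v : idle G c ->
    trans G (SProc (PRcv c x P Q)) (ARcv c v) (SAct c x P)
| TRcvIgn G W c v : ~~ rcvc G W c -> trans G W (ARcv c v) W
| TSync1 G W1 W1' W2 W2' c v :
    trans G W1 (ASnd c v) W1' -> trans G W2 (ARcv c v) W2' ->
    trans G (SPar W1 W2) (ASnd c v) (SPar W1' W2')
| TSync2 G W1 W1' W2 W2' c v :
    trans G W1 (ARcv c v) W1' -> trans G W2 (ASnd c v) W2' ->
    trans G (SPar W1 W2) (ASnd c v) (SPar W1' W2')
| TRcvPar G W1 W1' W2 W2' c v :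
    trans G W1 (ARcv c v) W1' -> trans G W2 (ARcv c v) W2' ->
    trans G (SPar W1 W2) (ARcv c v) (SPar W1' W2')
| TTimeNil G : trans G (SProc PNil) ASig (SProc PNil)
| TSleep G P : trans G (SProc (PSig P)) ASig (SProc P)
| TActRcv G c x P : 1 < (G c).1 -> trans G (SAct c x P) ASig (SAct c x P)
| TEndRcv G c x P : (G c).1 = 1 ->
    trans G (SAct c x P) ASig (SProc (psubst (G c).2 x P))
| TTimeout G c x P Q : idle G c -> trans G (SProc (PRcv c x P Q)) ASig (SProc Q)
| TRcvLate G c x P Q : exposed G c ->
    trans G (SProc (PRcv c x P Q)) ATau (SAct c x (psubst (err L) x P))
| TTau G P : trans G (SProc (PTau P)) ATau (SProc P)
| TThen G b P Q : beval G b -> trans G (SProc (PIf b P Q)) ATau (SProc (PSig P))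
| TElse G b P Q : ~ beval G b -> trans G (SProc (PIf b P Q)) ATau (SProc (PSig Q))
| TTimePar G W1 W1' W2 W2' :
    trans G W1 ASig W1' -> trans G W2 ASig W2' ->
    trans G (SPar W1 W2) ASig (SPar W1' W2')
| TTauPar1 G W1 W1' W2 : trans G W1 ATau W1' -> trans G (SPar W1 W2) ATau (SPar W1' W2)
| TTauPar2 G W1 W2 W2' : trans G W2 ATau W2' -> trans G (SPar W1 W2) ATau (SPar W1 W2')
| TRec G Y P l W : trans G (SProc (psubstX (PFix Y P) Y P)) l W ->
    trans G (SProc (PFix Y P)) l W
| TSum1 G P Q l W : out_act l -> trans G (SProc P) l W -> trans G (SProc (PSum P Q)) l W
| TSum2 G P Q l W : out_act l -> trans G (SProc Q) l W -> trans G (SProc (PSum P Q)) l W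
| TSumTime G P P' Q Q' :
    trans G (SProc P) ASig (SProc P') -> trans G (SProc Q) ASig (SProc Q') ->
    trans G (SProc (PSum P Q)) ASig (SProc (PSum P' Q'))
| TSumRcv1 G P Q c v W : trans G (SProc P) (ARcv c v) W -> rcvc G (SProc P) c ->
    trans G (SProc (PSum P Q)) (ARcv c v) W
| TSumRcv2 G P Q c v W : trans G (SProc Q) (ARcv c v) W -> rcvc G (SProc Q) c ->
    trans G (SProc (PSum P Q)) (ARcv c v) W
| TResI G c n v W w W' : trans (upd G c (n, v)) W (ASnd c w) W' ->
    let p := act_upd (ASnd c w) (upd G c (n, v)) c in
    trans G (SRes c n v W) ATau (SRes c p.1 p.2 W')
| TResV G c n v W l W' : trans (upd G c (n, v)) W l W' -> ~~ act_mentions c l ->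
    let p := act_upd l (upd G c (n, v)) c in
    trans G (SRes c n v W) l (SRes c p.1 p.2 W')
(* terms are identified up to alpha-conversion *)
| TAlpha G W W1 l W2 W' : salpha W W1 -> trans G W1 l W2 -> salpha W2 W' ->
    trans G W l W'.

Definition config := (env * sys)%type.

Definition red_i (p q : config) : Prop :=
  exists l, out_act l /\ trans p.1 p.2 l q.2 /\ q.1 =1 act_upd l p.1.

Inductive star {A : Type} (R : A -> A -> Prop) : A -> A -> Prop :=
| star_refl a : star R a a
| star_step a b c : R a b -> star R b c -> star R a c.

Inductive eact := EIn (c : C) (v : V) | ESig | ETau | EGamma (c : C) (v : V) | EIota (c : C).

Inductive ext : env -> sys -> eact -> env -> sys -> Prop :=
| XInput G W c v W' G' : trans G W (ARcv c v) W' -> G' =1 act_upd (ARcv c v) G ->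
    ext G W (EIn c v) G' W'
| XTime G W W' G' : trans G W ASig W' -> G' =1 act_upd ASig G -> ext G W ESig G' W'
| XShh G W c v W' G' : trans G W (ASnd c v) W' -> G' =1 act_upd (ASnd c v) G ->
    ext G W ETau G' W'
| XTauExt G W W' G' : trans G W ATau W' -> G' =1 G -> ext G W ETau G' W'
| XDeliver G W c v W' G' : G c = (1, v) -> trans G W ASig W' ->
    G' =1 act_upd ASig G -> ext G W (EGamma c v) G' W'
| XIdle G W c G' : idle G c -> G' =1 G -> ext G W (EIota c) G' W.

Definition ext_tau (p q : config) : Prop := ext p.1 p.2 ETau q.1 q.2.

Definition weak_ext (G : env) (W : sys) (a : eact) (G' : env) (W' : sys) : Prop :=
  exists G1 W1 G2 W2, star ext_tau (G, W) (G1, W1) /\ ext G1 W1 a G2 W2 /\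
                      star ext_tau (G2, W2) (G', W').

Inductive wf : env -> sys -> Prop :=
| wf_proc G P : pclosed [::] [::] P -> wf G (SProc P)
| wf_act G c x P : exposed G c -> wf G (SAct c x P)
| wf_par G W1 W2 : wf G W1 -> wf G W2 -> wf G (SPar W1 W2)
| wf_res G c n v W : wf (upd G c (n, v)) W -> wf G (SRes c n v W).

Definition Ttest (c : C) (v : V) (eureka fail : C) (arb no : V) : proc :=
  PSum (PSnd c (EVal v) (PSnd eureka (EVal arb) PNil)) (PSnd fail (EVal no) PNil).

Definition Tok (v : V) (eureka : C) (arb : V) : proc :=
  sigma_n (delta v) (PSnd eureka (EVal arb) PNil).

End CCCP.

From HB Require Import structures.
From mathcomp Require Import all_boot.

(* The test T_{c?v} never receives, so next to W an instantaneous reduction of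
   W | T_{c?v} either leaves T_{c?v} untouched while W takes an extensional
   tau-step, or lets T_{c?v} broadcast c!v, received by W as an extensional c?v
   step, turning the test into T✓, or lets it broadcast on fail, turning it
   into sigma.0.  A sleeping process sigma.P is likewise untouched by
   instantaneous reductions, so a run of W | T_{c?v} to W' | T✓ is exactly a
   run ==> -c?v-> ==> of W.  Transitions are closed under alpha-conversion, so
   the inversions rest on alpha-equivalence preserving parallel composition
   and being the identity on binder-free processes. *)

Set Implicit Arguments.
Unset Strict Implicit.
Unset Printing Implicit Defensive.

Lemma star_trans (A : Type) (R : A -> A -> Prop) a b c :
  star R a b -> star R b c -> star R a c.
Proof. by elim=> // a1 a2 a3 r _ IH /IH; apply: star_step. Qed.

Lemma star_map (A B : Type) (R : A -> A -> Prop) (S : B -> B -> Prop) (f : A -> B) :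
  (forall a b, R a b -> S (f a) (f b)) -> forall a b, star R a b -> star S (f a) (f b).
Proof.
by move=> RS a b; elim=> [a1|a1 a2 a3 /RS r _ IH]; [apply: star_refl|apply: star_step r IH].
Qed.

Section Alpha.
Context {L : lang}.

Fixpoint binder_free (P : @proc L) : bool :=
  match P with
  | PSnd _ _ P | PSig P | PTau P => binder_free P
  | PSum P Q | PIf _ P Q => binder_free P && binder_free Q
  | PVar _ | PNil => true
  | PRcv _ _ _ _ | PFix _ _ => false
  end.

Fixpoint sbinder_free (W : @sys L) : bool :=
  match W with
  | SProc P => binder_free P
  | SPar W1 W2 => sbinder_free W1 && sbinder_free W2
  | SAct _ _ _ | SRes _ _ _ _ => false
  end.

Lemma binder_free_sigma k (P : @proc L) : binder_free (sigma_n k P) = binder_free P.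
Proof. by elim: k. Qed.

Lemma palpha_binder_free (P Q : @proc L) :
  palpha P Q -> binder_free P || binder_free Q -> P = Q.
Proof.
have split2 (a b a' b' : bool) : (a && b) || (a' && b') -> (a || a') && (b || b').
  by case: a b a' b' => [] [] [] [].
elim=> {P Q} //=.
- by move=> P Q _ IH; rewrite orbC => /IH ->.
- move=> P Q R _ IH1 _ IH2 /orP[bP | bR].
  + by move: IH2; rewrite -(IH1 _) ?bP // => ->; rewrite ?bP.
  + by move: IH1; rewrite (IH2 _) ?bR ?orbT // => ->; rewrite ?bR ?orbT.
- by move=> c e P P' _ IH /IH ->.
- by move=> P P' _ IH /IH ->.
- by move=> P P' _ IH /IH ->.
- by move=> P P' Q Q' _ IHP _ IHQ /split2/andP[/IHP -> /IHQ ->].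
- by move=> b P P' Q Q' _ IHP _ IHQ /split2/andP[/IHP -> /IHQ ->].
Qed.

Lemma salpha_binder_free (S Y : @sys L) :
  salpha S Y -> sbinder_free S || sbinder_free Y -> S = Y.
Proof.
have split2 (a b a' b' : bool) : (a && b) || (a' && b') -> (a || a') && (b || b').
  by case: a b a' b' => [] [] [] [].
elim=> {S Y} //=.
- by move=> S Y _ IH; rewrite orbC => /IH ->.
- move=> S Y Z _ IH1 _ IH2 /orP[bS | bZ].
  + by move: IH2; rewrite -(IH1 _) ?bS // => ->; rewrite ?bS.
  + by move: IH1; rewrite (IH2 _) ?bZ ?orbT // => ->; rewrite ?bZ ?orbT.
- by move=> P P' /palpha_binder_free h /h ->.
- by move=> W1 W1' W2 W2' _ IH1 _ IH2 /split2/andP[/IH1 -> /IH2 ->].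
Qed.

Lemma salpha_binder_freeE (S Y : @sys L) : salpha S Y -> sbinder_free S -> Y = S.
Proof. by move=> a bS; rewrite (salpha_binder_free a) ?bS. Qed.

Definition par_alpha (S Y : @sys L) : Prop :=
  match S, Y with
  | SPar A B, SPar A' B' => salpha A A' /\ salpha B B'
  | SPar _ _, _ | _, SPar _ _ => False
  | _, _ => True
  end.

Lemma salpha_par (S Y : @sys L) : salpha S Y -> par_alpha S Y.
Proof.
elim=> {S Y} //.
- by case=> // A B; split; apply: sa_refl.
- move=> S Y _; case: S => [P|c x P|A B|c n v W]; case: Y => //= *;
    by intuition (apply: sa_sym).
- move=> S Y Z _ + _.
  case: S => [P|c x P|A B|c n v W]; case: Y => [P'|c' x' P'|A' B'|c' n' v' W'];
    case: Z => //= *; by intuition (apply: sa_trans; eassumption).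
Qed.

Lemma salpha_parl (A B Y : @sys L) : salpha (SPar A B) Y ->
  exists A' B', Y = SPar A' B' /\ salpha A A' /\ salpha B B'.
Proof. by move/salpha_par; case: Y => // A' B'; exists A', B'. Qed.

Lemma salpha_parr (S A B : @sys L) : salpha S (SPar A B) ->
  exists A' B', S = SPar A' B' /\ salpha A A' /\ salpha B B'.
Proof. by move/sa_sym/salpha_parl. Qed.

End Alpha.

Section ParallelTransitions.
Context {L : lang}.

Definition par_trans (G : @env L) (A B : sys) (l : act) (A' B' : sys) : Prop :=
  match l with
  | ASnd c v => trans G A (ASnd c v) A' /\ trans G B (ARcv c v) B' \/
                trans G A (ARcv c v) A' /\ trans G B (ASnd c v) B'
  | ARcv c v => trans G A (ARcv c v) A' /\ trans G B (ARcv c v) B'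
  | ASig => trans G A ASig A' /\ trans G B ASig B'
  | ATau => trans G A ATau A' /\ salpha B B' \/ salpha A A' /\ trans G B ATau B'
  end.

Lemma par_trans_alpha G A0 B0 A B A'0 B'0 A' B' l :
  salpha A A0 -> salpha B B0 -> salpha A'0 A' -> salpha B'0 B' ->
  par_trans G A0 B0 l A'0 B'0 -> par_trans G A B l A' B'.
Proof.
move=> hA hB hA' hB'; have tA := TAlpha hA; have tB := TAlpha hB.
case: l => [c v|c v||] /=.
- by case=> -[t1 t2]; [left|right]; split; [exact: tA t1 hA'|exact: tB t2 hB'
    |exact: tA t1 hA'|exact: tB t2 hB'].
- by case=> t1 t2; split; [exact: tA t1 hA'|exact: tB t2 hB'].
- by case=> t1 t2; split; [exact: tA t1 hA'|exact: tB t2 hB'].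
- case=> -[t1 t2]; [left|right]; split; try exact: tA t1 hA'; try exact: tB t2 hB'.
  + exact: sa_trans hB (sa_trans t2 hB').
  + exact: sa_trans hA (sa_trans t1 hA').
Qed.

(* Generalized over alpha-equivalents of [SPar A B] to absorb the rule [TAlpha]. *)
Lemma trans_par_inv G S l X : trans G S l X -> forall A B, salpha S (SPar A B) ->
  exists A' B', X = SPar A' B' /\ par_trans G A B l A' B'.
Proof.
induction 1 as [| | G W c v noRcv | G W1 W1' W2 W2' c v t1 _ t2 _
  | G W1 W1' W2 W2' c v t1 _ t2 _ | G W1 W1' W2 W2' c v t1 _ t2 _ | | | | | | | | |
  | G W1 W1' W2 W2' t1 _ t2 _ | G W1 W1' W2 t1 _ | G W1 W2 W2' t2 _ | | | | | | | |
  | G W W1 l W2 W' a1 _ IH a2] => A B hS;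
  have [A1 [B1 [ES [hA hB]]]] := salpha_parr hS; try discriminate ES.
- subst; exists A1, B1; split=> //; apply: (par_trans_alpha hA hB (sa_refl _) (sa_refl _)).
  move: noRcv; rewrite /rcvc /= negb_and negb_or => noRcv.
  by split; apply: TRcvIgn; rewrite /rcvc negb_and;
    case/orP: noRcv => [->//|/andP[h1 h2]]; rewrite ?h1 ?h2 orbT.
all: try (injection ES as eA eB; subst; eexists; eexists; split; first reflexivity;
  apply: (par_trans_alpha hA hB (sa_refl _) (sa_refl _)) => /=;
  by intuition (apply: sa_refl)).
have [A2 [B2 [E2 ps]]] := IH A B (sa_trans (sa_sym a1) hS); subst W2.
have [A3 [B3 [-> [h3 h4]]]] := salpha_parl a2.
by exists A3, B3; split=> //; apply: (par_trans_alpha (sa_refl _) (sa_refl _) h3 h4 ps).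
Qed.

Lemma red_par_inv G (A B : @sys L) G1 S1 : red_i (G, SPar A B) (G1, S1) ->
  exists A1 B1, S1 = SPar A1 B1 /\
  [\/ ext_tau (G, A) (G1, A1) /\ (salpha B B1 \/ exists c v, trans G B (ARcv c v) B1),
      exists c v, ext G A (EIn c v) G1 A1 /\ trans G B (ASnd c v) B1
    | trans G B ATau B1].
Proof.
case=> l [out [/= t eG]]; have [A1 [B1 [-> ps]]] := trans_par_inv t (sa_refl _).
exists A1, B1; split=> //; case: out => [el | [c [v el]]]; subst l.
- case: ps => [[tA hB] | [_ tB]]; last exact: Or33.
  by apply: Or31; split; [exact: XTauExt | left].
- case: ps => [[tA tB] | [tA tB]].
  + by apply: Or31; split; [exact: XShh tA eG | right; exists c, v].
  + by apply: Or32; exists c, v; split=> //; exact: XInput tA eG.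
Qed.

End ParallelTransitions.

Section SequentialTransitions.
Context {L : lang}.

Lemma trans_sig_inv G S l X (P : @proc L) :
  trans G S l X -> S = SProc (PSig P) -> binder_free P ->
  l = ASig /\ X = SProc P \/ exists c v, l = ARcv c v /\ X = S.
Proof.
move=> t + bP; elim: t => {G S l X} // [G W c v _ _ | G P' [->] | G W W1 l W2 W' a1 _ IH a2 E].
- by right; exists c, v.
- by left.
have bW : sbinder_free W by rewrite E.
rewrite (salpha_binder_freeE a1 bW) in IH.
case: (IH E) => [[-> E2] | [c [v [-> E2]]]]; subst W2.
- by left; split=> //; rewrite (salpha_binder_freeE a2 bP).
- by right; exists c, v; rewrite (salpha_binder_freeE a2 bW).
Qed.

Lemma trans_snd_inv G S l X c e (P : @proc L) :
  trans G S l X -> S = SProc (PSnd c e P) -> binder_free P ->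
  l = ASnd c (eval e) /\ X = SProc (sigma_n (delta (eval e)) P) \/
  exists d w, l = ARcv d w /\ X = S.
Proof.
move=> t + bP; elim: t => {G S l X} //
  [G c' e' P' v <- [-> -> ->] | G W d w _ _ | G W W1 l W2 W' a1 _ IH a2 E].
- by left.
- by right; exists d, w.
have bW : sbinder_free W by rewrite E.
rewrite (salpha_binder_freeE a1 bW) in IH.
case: (IH E) => [[-> E2] | [d [w [-> E2]]]]; subst W2.
- by left; split=> //; rewrite (salpha_binder_freeE a2) //= binder_free_sigma.
- by right; exists d, w; rewrite (salpha_binder_freeE a2 bW).
Qed.

Lemma trans_sum_snd_inv G S l X c1 e1 (P1 : @proc L) c2 e2 P2 :
  trans G S l X -> S = SProc (PSum (PSnd c1 e1 P1) (PSnd c2 e2 P2)) ->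
  binder_free P1 -> binder_free P2 ->
  [\/ l = ASnd c1 (eval e1) /\ X = SProc (sigma_n (delta (eval e1)) P1),
      l = ASnd c2 (eval e2) /\ X = SProc (sigma_n (delta (eval e2)) P2),
      exists d w, l = ARcv d w /\ X = S
    | l = ASig].
Proof.
move=> t + bP1 bP2; elim: t => {G S l X} //
  [G W d w _ _ | G P Q l W out tP _ [eP _] | G P Q l W out tQ _ [_ eQ]
  | G P P' Q Q' _ _ _ _ _ | G P Q d w W _ _ + [eP _] | G P Q d w W _ _ + [_ eQ]
  | G W W1 l W2 W' a1 _ IH a2 E].
- by apply: Or43; exists d, w.
- subst P; case: (trans_snd_inv tP erefl bP1) => [[-> ->] | [d [w [el _]]]].
    exact: Or41.
  by subst l; case: out => [|[? [? ?]]].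
- subst Q; case: (trans_snd_inv tQ erefl bP2) => [[-> ->] | [d [w [el _]]]].
    exact: Or42.
  by subst l; case: out => [|[? [? ?]]].
- exact: Or44.
- by subst P; rewrite /rcvc andbF.
- by subst Q; rewrite /rcvc andbF.
have bW : sbinder_free W by rewrite E /= bP1 bP2.
rewrite (salpha_binder_freeE a1 bW) in IH.
case: (IH E) => [[-> E2] | [-> E2] | [d [w [-> E2]]] | ->]; try subst W2.
- by apply: Or41; split=> //; rewrite (salpha_binder_freeE a2) //= binder_free_sigma.
- by apply: Or42; split=> //; rewrite (salpha_binder_freeE a2) //= binder_free_sigma.
- by apply: Or43; exists d, w; rewrite (salpha_binder_freeE a2 bW).
- exact: Or44.
Qed.

End SequentialTransitions.

Section PassiveComponents.
Context {L : lang}.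

Lemma weak_ext_tau_step (G G1 G' : @env L) W W1 W' a :
  ext_tau (G, W) (G1, W1) -> weak_ext G1 W1 a G' W' -> weak_ext G W a G' W'.
Proof.
move=> h [G2 [W2 [G3 [W3 [s1 [x s2]]]]]].
by exists G2, W2, G3, W3; split=> //; apply: star_step h s1.
Qed.

Lemma ext_tau_red_par (Q : @proc L) (p q : config) :
  (forall c, rcvp Q c = false) -> ext_tau p q ->
  red_i (p.1, SPar p.2 (SProc Q)) (q.1, SPar q.2 (SProc Q)).
Proof.
case: p q => G W [G1 W1] noRcv; rewrite /ext_tau /= => h.
have ign c : ~~ rcvc G (SProc Q) c by rewrite /rcvc /= noRcv andbF.
inversion h; subst.
- exists (ASnd c v); split; first by right; exists c, v.
  by split=> //=; apply: TSync1 (TRcvIgn _ _).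
- by exists ATau; split; [left | split=> //=; apply: TTauPar1].
Qed.

Lemma star_ext_tau_red_par (Q : @proc L) (p q : config) :
  (forall c, rcvp Q c = false) -> star ext_tau p q ->
  star red_i (p.1, SPar p.2 (SProc Q)) (q.1, SPar q.2 (SProc Q)).
Proof.
move=> noRcv; apply: (star_map (f := fun p => (p.1, SPar p.2 (SProc Q)))) => p' q'.
exact: ext_tau_red_par.
Qed.

Lemma red_par_sig_inv G W (P : @proc L) G1 S1 :
  binder_free P -> red_i (G, SPar W (SProc (PSig P))) (G1, S1) ->
  exists W1, S1 = SPar W1 (SProc (PSig P)) /\ ext_tau (G, W) (G1, W1).
Proof.
move=> bP /red_par_inv [W1 [B1 [-> []]]].
- move=> [h [a | [c [v tB]]]]; exists W1; split=> //.
  + by rewrite (salpha_binder_freeE a).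
  + by case: (trans_sig_inv tB erefl bP) => [[] | [? [? [_ ->]]]].
- by move=> [c [v [_ tB]]]; case: (trans_sig_inv tB erefl bP) => [[] | [? [? []]]].
- by move=> tB; case: (trans_sig_inv tB erefl bP) => [[] | [? [? []]]].
Qed.

Lemma star_red_par_sig G W (P : @proc L) q :
  binder_free P -> star red_i (G, SPar W (SProc (PSig P))) q ->
  exists W1, q.2 = SPar W1 (SProc (PSig P)) /\ star ext_tau (G, W) (q.1, W1).
Proof.
move=> bP s; move E: (G, _) s => p s; elim: s G W E => [p0 | p0 [G1 S1] q0 h _ IH] G W E.
  by subst; exists W; split=> //; apply: star_refl.
subst; have [W1 [E1 h1]] := red_par_sig_inv bP h; subst S1.
have [W2 [-> s2]] := IH G1 W1 erefl.
by exists W2; split=> //; apply: star_step h1 s2.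
Qed.

End PassiveComponents.

Section TestProcess.
Context {L : lang}.
Variables (c eureka fail : chan L) (v arb no : cval L).
Local Notation T := (Ttest c v eureka fail arb no).

Lemma red_par_test_inv G W G1 S1 : red_i (G, SPar W (SProc T)) (G1, S1) ->
  [\/ exists W1, S1 = SPar W1 (SProc T) /\ ext_tau (G, W) (G1, W1),
      exists W1, S1 = SPar W1 (SProc (Tok v eureka arb)) /\ ext G W (EIn c v) G1 W1
    | exists W1, S1 = SPar W1 (SProc (sigma_n (delta no) PNil))].
Proof.
have inv G' l X (t : trans G' (SProc T) l X) :=
  @trans_sum_snd_inv L G' _ l X c (EVal v) (PSnd eureka (EVal arb) PNil) fail (EVal no) PNil
    t erefl erefl erefl.
move/red_par_inv => [W1 [B1 [-> []]]].
- move=> [h [a | [d [w tB]]]]; apply: Or31; exists W1; split=> //.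
  + by rewrite (salpha_binder_freeE a).
  + by case: (inv _ _ _ tB) => [[] | [] | [? [? [_ ->]]] |].
- move=> [d [w [x tB]]].
  case: (inv _ _ _ tB) => [[[ed ew] ->] | [_ ->] | [? [? []]] |] //.
  + by subst d w; apply: Or32; exists W1.
  + by apply: Or33; exists W1.
- by move=> tB; case: (inv _ _ _ tB) => [[] | [] | [? [? []]] |].
Qed.

Lemma red_test_weak_input G W G' W' : 0 < delta v -> delta no = 1 ->
  star red_i (G, SPar W (SProc T)) (G', SPar W' (SProc (Tok v eureka arb))) ->
  weak_ext G W (EIn c v) G' W'.
Proof.
move=> v_pos no1.
have Tok_sig : Tok v eureka arb = PSig (sigma_n (delta v).-1 (PSnd eureka (EVal arb) PNil)).
  by rewrite /Tok; case: (delta v) v_pos.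
have bP : binder_free (sigma_n (delta v).-1 (PSnd eureka (EVal arb) PNil)).
  by rewrite binder_free_sigma.
rewrite Tok_sig; move E: (G, _) => p; move E': (G', _) => q s.
elim: s G W E E' => [p0 | p0 [G1 S1] q0 h s IH] G W E E'; subst.
  by case: E'.
case: (red_par_test_inv h) => [[W1 [E1 h1]] | [W1 [E1 x]] | [W1 E1]]; subst S1.
- exact: weak_ext_tau_step h1 (IH _ _ erefl erefl).
- rewrite Tok_sig in s; have [W2 [/= [<-] s2]] := star_red_par_sig bP s.
  by exists G, W, G1, W1; split; [apply: star_refl | split].
- rewrite no1 in s; have [W2 [/= [_] ]] := star_red_par_sig (P := PNil) erefl s.
  by case: (delta v).-1.
Qed.

Lemma weak_input_red_test G W G' W' : weak_ext G W (EIn c v) G' W' ->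
  star red_i (G, SPar W (SProc T)) (G', SPar W' (SProc (Tok v eureka arb))).
Proof.
move=> [G1 [W1 [G2 [W2 [s1 [x s2]]]]]].
apply: star_trans (star_ext_tau_red_par _ s1) _ => //=.
apply: star_step (star_ext_tau_red_par _ s2); last by move=> d; rewrite /Tok; case: (delta v).
inversion x; subst.
exists (ASnd c v); split; first by right; exists c, v.
split=> //=; apply: TSync2; first eassumption.
by apply: TSum1; [right; exists c, v | apply: TSnd].
Qed.

End TestProcess.

Theorem mainTheorem17 (L : lang) (G G' : @env L) (W W' : @sys L)
    (c : chan L) (v : cval L) (eureka fail : chan L) (arb no : cval L) :
  (forall w : cval L, 0 < delta w) ->
  sclosed W -> sguarded W -> wf G W ->
  ~~ sfree_c eureka W -> ~~ sfree_c fail W ->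
  idle G eureka -> idle G fail ->
  delta arb = 1 -> delta no = 1 ->
  (weak_ext G W (EIn c v) G' W' <->
   star red_i (G, SPar W (SProc (Ttest c v eureka fail arb no)))
              (G', SPar W' (SProc (Tok v eureka arb)))).
Proof.
move=> delta_pos _ _ _ _ _ _ _ _ no1; split.
- exact: weak_input_red_test.
- exact: red_test_weak_input (delta_pos v) no1.
Qed.
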